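(* Let $N_o>0$, $\alpha>0$, and $\eta(d)=\frac{1}{(1+d)^\alpha}$. Let $C,D>0$ and let $t,r\in\mathbb{R}^2$ and $T$ a finite subset of $\mathbb{R}^2$ be such that $(t,r,T)$ satisfies the DC$(C,D)$ criterion. Then for all $P>0$, $$\mathrm{SINR}(t,r,T,P,N_o,\eta)\ \ge\ \frac{1}{(1+C)^\alpha\Big(\frac{N_o}{P}+\sum_{k=1}^{K}\frac{6k+3}{(1+kC(1+D/2))^\alpha}\Big)},$$ where $K=\Big\lfloor\frac{\max\{\|t'-r\|:t'\in T\}}{C(1+D/2)}\Big\rfloor$.
   Context: $\mathrm{SINR}(t,r,T,P,N_o,\eta)=\dfrac{P\eta(\|t-r\|)}{N_o+\sum_{t'\in T}P\eta(\|t'-r\|)}$. The triple $(t,r,T)$ satisfies DC$(C,D)$ if $\|t-r\|\le C$ and $\|t'-t''\|\ge C(2+D)$ for all distinct $t',t''\in T\cup\{t\}$. *)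

From HB Require Import structures.
From mathcomp Require Import all_boot all_order all_algebra.
From mathcomp Require Import all_classical all_reals all_analysis.
Set Implicit Arguments. Unset Strict Implicit. Unset Printing Implicit Defensive.
Import Order.TTheory GRing.Theory Num.Theory.
Local Open Scope ring_scope.

Definition dist2 {R : realType} (p q : R * R) : R :=
  Num.sqrt ((p.1 - q.1) ^+ 2 + (p.2 - q.2) ^+ 2).

Definition eta_pl {R : realType} (alpha d : R) : R := 1 / ((1 + d) `^ alpha).

(* SINR(t, r, T, P, No, eta); T a finite set given as a duplicate-free list. *)
Definition SINR {R : realType} (t r : R * R) (T : seq (R * R)) (P No : R)
  (eta : R -> R) : R :=
  P * eta (dist2 t r) / (No + \sum_(t' <- T) P * eta (dist2 t' r)).

Definition DC {R : realType} (C D : R) (t r : R * R) (T : seq (R * R)) : Prop :=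
  dist2 t r <= C /\
  (forall a b, a \in t :: T -> b \in t :: T -> a != b -> C * (2 + D) <= dist2 a b).

(* max { ||t' - r|| : t' in T } (taken as 0 when T is empty). *)
Definition maxdist {R : realType} (r : R * R) (T : seq (R * R)) : R :=
  \big[Num.max/0]_(t' <- T) dist2 t' r.

Definition Kbound {R : realType} (C D : R) (r : R * R) (T : seq (R * R)) : nat :=
  Num.truncn (maxdist r T / (C * (1 + D / 2))).

(* Let c := C (1 + D/2). By the triangle inequality every interferer lies at
   distance at least c from r, and DC(C, D) keeps the interferers pairwise at
   least 2c apart. Sort them into the annuli k c <= |p - r| < (k + 1) c,
   1 <= k <= K, and cut the k-th annulus into 6k + 3 sectors of angle
   2 pi / (6k + 3). By the law of cosines two points of one sector are closer
   than 2c, because 2 (k + 1)^2 (1 - cos (2 pi / (6k + 3))) <= 3. So the k-th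
   annulus holds at most 6k + 3 interferers, each received with gain at most
   eta (k c), while the signal is received with gain at least eta C. *)

From HB Require Import structures.
From mathcomp Require Import all_boot all_order all_algebra.
From mathcomp Require Import all_classical all_reals all_analysis.
From mathcomp Require Import ring lra.
Import Order.TTheory GRing.Theory Num.Theory.
Import numFieldNormedType.Exports.
Local Open Scope classical_set_scope.
Local Open Scope ring_scope.

Section Trigonometry.
Context {R : realType}.
Implicit Types x y : R.

Lemma sin_le_id y : 0 <= y -> sin y <= y.
Proof.
move=> y0.
have hd x : x \in `]0, y[%R -> is_derive x 1 (fun x => x - sin x) (1 - cos x).
  by move=> _; apply: is_deriveB.
have hc : {within `[0, y], continuous (fun x : R => x - sin x)}.
  apply: continuous_subspaceT => x.
  by apply: continuousB; [exact: cvg_id | exact: continuous_sin].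
have [c _] := MVT_segment y0 hd hc; rewrite sin0 !subr0 => mvt.
by rewrite -subr_ge0 mvt mulr_ge0 // subr_ge0 cos_le1.
Qed.

Lemma one_sub_cos_le x : 0 <= x <= pi -> 1 - cos x <= x ^+ 2 / 2.
Proof.
move=> /andP[x0 xpi].
have cos_half : cos x = 2 * cos (x / 2) ^+ 2 - 1.
  by rewrite mulr_natl -cos_mulr2n mulr2n -splitr.
have sin_half_ge0 : 0 <= sin (x / 2).
  by apply: sin_ge0_pi; rewrite divr_ge0 //= ler_pdivrMr //; lra.
have sin_half_le : sin (x / 2) ^+ 2 <= (x / 2) ^+ 2.
  by rewrite ler_pXn2r ?nnegrE ?divr_ge0 ?sin_le_id ?divr_ge0.
have -> : x ^+ 2 / 2 = 2 * (x / 2) ^+ 2 by field.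
have := cos2Dsin2 (x / 2); rewrite cos_half; lra.
Qed.

Lemma cos_lt_norm x y : `|x| < y -> y <= pi -> cos y < cos x.
Proof.
move=> xy ypi; have x0 := normr_ge0 x.
have x_itv : `|x| \in `[0, pi]%R by rewrite in_itv /= x0 (le_trans (ltW xy)).
have y_itv : y \in `[0, pi]%R by rewrite in_itv /= (le_trans x0 (ltW xy)).
by rewrite -[cos x]cos_norm ltr_cos.
Qed.

Lemma pi_lt4 : pi < 4 :> R.
Proof. by have := @pihalf_lt2 R; rewrite ltr_pdivrMr //; lra. Qed.

Lemma cos_pi_quarter_ge : 5 / 8 <= cos (pi / 4 : R).
Proof.
have : cos (pi / 2 : R) = cos (pi / 4) ^+ 2 *+ 2 - 1.
  by rewrite -cos_mulr2n mulr2n; congr cos; field.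
rewrite cos_pihalf mulr2n.
have : 0 <= cos (pi / 4 : R).
  by apply: cos_ge0_pihalf; have := @pi_gt0 R => ?; apply/andP; split; lra.
nra.
Qed.

Definition sector_width (k : nat) : R := pi *+ 2 / (6 * k%:R + 3).

Lemma sector_size_gt0 (k : nat) : 0 < 6 * k%:R + 3 :> R.
Proof. by rewrite ltr_wpDl // mulr_ge0. Qed.

Lemma sector_widthK (k : nat) : sector_width k * (6 * k%:R + 3) = pi *+ 2.
Proof. by rewrite divfK // gt_eqF // sector_size_gt0. Qed.

Lemma sector_width_gt0 (k : nat) : 0 < sector_width k.
Proof. by rewrite divr_gt0 ?sector_size_gt0 // mulrn_wgt0 // pi_gt0. Qed.

Lemma sector_width_le_pi (k : nat) : sector_width k <= pi.
Proof.
have := sector_size_gt0 k; have := @pi_gt0 R; have : 0 <= k%:R :> R by [].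
by rewrite ler_pdivrMr ?sector_size_gt0 // mulr2n; nra.
Qed.

Lemma sqr_sector_width_le (k : nat) : (2 <= k)%N ->
  ((k%:R + 1) * sector_width k) ^+ 2 <= 3.
Proof.
rewrite -(ler_nat R) => k2.
have M0 := sector_size_gt0 k.
have pi4 := pi_lt4; have pi0 := @pi_gt0 R.
rewrite -(ler_pM2r (exprn_gt0 2 M0)) -exprMn -mulrA sector_widthK mulr2n.
have lb : 0 <= (k%:R + 1) * (pi + pi) :> R by nra.
have ub : (k%:R + 1) * (pi + pi) <= (k%:R + 1) * 8 :> R by nra.
have := ler_pM lb lb ub ub; rewrite -!expr2; nra.
Qed.

Lemma sector_cos_bound (k : nat) : (1 <= k)%N ->
  2 * (k%:R + 1) ^+ 2 * (1 - cos (sector_width k)) <= 3.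
Proof.
have pi0 := @pi_gt0 R.
case: k => [//|[_|k _]].
  (* For k = 1, [1 - cos x <= x^2/2] with [pi < 4] is too weak: compare with [pi/4]. *)
  have w0 := sector_width_gt0 1.
  have w_le : sector_width 1 <= pi / 4.
    by rewrite /sector_width ler_pdivrMr ?sector_size_gt0 // mulr2n; lra.
  have : cos (pi / 4) <= cos (sector_width 1).
    move: w_le; rewrite le_eqVlt => /predU1P[-> //|w_lt].
    by apply: ltW; rewrite ltr_cos // in_itv /=; apply/andP; split; lra.
  by have := cos_pi_quarter_ge; lra.
set w := sector_width k.+2; set m : R := k.+2%:R + 1.
have cos_w : 1 - cos w <= w ^+ 2 / 2.
  by apply: one_sub_cos_le; rewrite ltW ?sector_width_gt0 ?sector_width_le_pi.
apply: (le_trans _ (@sqr_sector_width_le k.+2 isT)).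
have -> : (m * w) ^+ 2 = 2 * m ^+ 2 * (w ^+ 2 / 2) by field.
by apply: ler_wpM2l => //; rewrite mulr_ge0 ?sqr_ge0.
Qed.

End Trigonometry.

Section Distance.
Context {R : realType}.
Implicit Types p q r : R * R.

Lemma sqr_dist2 p q : dist2 p q ^+ 2 = (p.1 - q.1) ^+ 2 + (p.2 - q.2) ^+ 2.
Proof. by rewrite sqr_sqrtr // addr_ge0 ?sqr_ge0. Qed.

Lemma dist2_ge0 p q : 0 <= dist2 p q.
Proof. exact: sqrtr_ge0. Qed.

Lemma dist2C p q : dist2 p q = dist2 q p.
Proof. by rewrite /dist2; congr Num.sqrt; ring. Qed.

Lemma cauchy_schwarz2 (a1 a2 b1 b2 : R) :
  a1 * b1 + a2 * b2 <= Num.sqrt (a1 ^+ 2 + a2 ^+ 2) * Num.sqrt (b1 ^+ 2 + b2 ^+ 2).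
Proof.
rewrite -sqrtrM ?addr_ge0 ?sqr_ge0 //.
have [neg|nneg] := ltP (a1 * b1 + a2 * b2) 0.
  by apply: le_trans (sqrtr_ge0 _); apply: ltW.
rewrite -(ger0_norm nneg) -sqrtr_sqr ler_sqrt ?mulr_ge0 ?addr_ge0 ?sqr_ge0 //.
by have := sqr_ge0 (a1 * b2 - a2 * b1); nra.
Qed.

Lemma dist2_triangle p q s : dist2 p s <= dist2 p q + dist2 q s.
Proof.
rewrite -ler_sqr ?nnegrE ?addr_ge0 ?dist2_ge0 //.
have cs : (p.1 - q.1) * (q.1 - s.1) + (p.2 - q.2) * (q.2 - s.2)
          <= dist2 p q * dist2 q s := cauchy_schwarz2 _ _ _ _.
rewrite sqrrD !sqr_dist2.
have -> : p.1 - s.1 = (p.1 - q.1) + (q.1 - s.1) by ring.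
have -> : p.2 - s.2 = (p.2 - q.2) + (q.2 - s.2) by ring.
lra.
Qed.

Definition polar_angle p r : R :=
  let x := (p.1 - r.1) / dist2 p r in
  if 0 <= p.2 - r.2 then acos x else pi *+ 2 - acos x.

Lemma polar_angleP {p r} : 0 < dist2 p r ->
  [/\ 0 <= polar_angle p r, polar_angle p r < pi *+ 2,
      p.1 - r.1 = dist2 p r * cos (polar_angle p r)
    & p.2 - r.2 = dist2 p r * sin (polar_angle p r)].
Proof.
move=> rho0; rewrite /polar_angle.
have rho2 := sqr_dist2 p r.
set rho := dist2 p r in rho0 rho2 *; set x := p.1 - r.1 in rho2 *.
set y := p.2 - r.2 in rho2 *.
have rho_neq0 : rho != 0 by rewrite gt_eqF.
have sin2 : 1 - (x / rho) ^+ 2 = (y / rho) ^+ 2.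
  by rewrite !expr_div_n -[y ^+ 2](addKr (x ^+ 2)) -rho2; field.
have x_itv : -1 <= x / rho <= 1.
  have := sqr_ge0 (y / rho); rewrite -sin2 => sq.
  by apply/andP; split; nra.
have cos_acos : cos (acos (x / rho)) = x / rho by rewrite acosK // in_itv.
have sin_acos : sin (acos (x / rho)) = `|y| / rho.
  by rewrite sin_acos // sin2 sqrtr_sqr normf_div (gtr0_norm rho0).
have pi0 := @pi_gt0 R.
have a0 := acos_ge0 x_itv; have api := acos_lepi x_itv.
case: ifPn => y0.
  split => //; first by rewrite mulr2n; lra.
    by rewrite cos_acos; field.
  by rewrite sin_acos ger0_norm //; field.
have y_lt0 : y < 0 by rewrite ltNge.
have x_lt1 : x / rho < 1.
  have : 0 < (y / rho) ^+ 2 by rewrite exprn_even_gt0 //= mulf_neq0 // ?invr_eq0 // lt_eqF.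
  by rewrite -sin2 => ?; nra.
have a_gt0 : 0 < acos (x / rho).
  by apply: acos_gt0; rewrite x_lt1 andbT; case/andP: x_itv.
split; first (by rewrite mulr2n; lra); first (by rewrite mulr2n; lra).
  by rewrite addrC cosD2pi cosN cos_acos; field.
by rewrite addrC sinD2pi sinN sin_acos ltr0_norm //; field.
Qed.

Lemma law_of_cosines {p q r} : 0 < dist2 p r -> 0 < dist2 q r ->
  dist2 p q ^+ 2 = dist2 p r ^+ 2 + dist2 q r ^+ 2
                   - 2 * dist2 p r * dist2 q r * cos (polar_angle p r - polar_angle q r).
Proof.
move=> /polar_angleP[_ _ px py] /polar_angleP[_ _ qx qy].
rewrite sqr_dist2 cosB.
have -> : p.1 - q.1 = (p.1 - r.1) - (q.1 - r.1) by ring.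
have -> : p.2 - q.2 = (p.2 - r.2) - (q.2 - r.2) by ring.
rewrite px py qx qy.
set a := dist2 p r; set b := dist2 q r.
set cp := cos (polar_angle p r); set sp := sin (polar_angle p r).
set cq := cos (polar_angle q r); set sq := sin (polar_angle q r).
apply/eqP; rewrite -subr_eq0; apply/eqP.
transitivity (a ^+ 2 * (cp ^+ 2 + sp ^+ 2 - 1) + b ^+ 2 * (cq ^+ 2 + sq ^+ 2 - 1)).
  by ring.
by rewrite !cos2Dsin2 subrr !mulr0 addr0.
Qed.

End Distance.

Lemma truncn_div_eq_dist_lt (F : archiRealFieldType) (a x y : F) :
  0 < a -> 0 <= x -> 0 <= y -> Num.truncn (x / a) = Num.truncn (y / a) ->
  `|x - y| < a.
Proof.
move=> a0 x0 y0 same.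
have /andP[x_lo x_hi] := truncn_itv (divr_ge0 x0 (ltW a0)).
have /andP[y_lo y_hi] := truncn_itv (divr_ge0 y0 (ltW a0)).
rewrite same -natr1 in x_lo x_hi; rewrite -natr1 in y_hi.
have -> : x - y = a * (x / a - y / a) by field; rewrite gt_eqF.
by rewrite normrM (gtr0_norm a0) -[ltRHS]mulr1 ltr_pM2l // ltr_norml; apply/andP; split; lra.
Qed.

Section Annuli.
Context {R : realType}.
Implicit Types (c : R) (p q r : R * R).

Definition in_annulus r c (k : nat) p : bool := k%:R * c <= dist2 p r < k.+1%:R * c.

Lemma in_annulus_truncn {r c p} : 0 < c -> 0 <= dist2 p r ->
  in_annulus r c (Num.truncn (dist2 p r / c)) p.
Proof.
move=> c0 d0; rewrite /in_annulus -!ler_pdivlMr // -ltr_pdivrMr //.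
exact: truncn_itv (divr_ge0 d0 (ltW c0)).
Qed.

Lemma dist2_lt_same_sector {c} {k : nat} {p q r} : 0 < c -> (1 <= k)%N ->
  in_annulus r c k p -> in_annulus r c k q ->
  `|polar_angle p r - polar_angle q r| < sector_width k ->
  dist2 p q < 2 * c.
Proof.
move=> c0 k1 /andP[p_lo p_hi] /andP[q_lo q_hi] close.
have k1R : 1 <= k%:R :> R by rewrite ler1n.
rewrite -natr1 in p_hi q_hi.
have p0 : 0 < dist2 p r by apply: lt_le_trans p_lo; nra.
have q0 : 0 < dist2 q r by apply: lt_le_trans q_lo; nra.
set w : R := sector_width k in close *.
have cos_close : cos w < cos (polar_angle p r - polar_angle q r).
  exact: cos_lt_norm close (sector_width_le_pi k).
rewrite -ltr_sqr ?nnegrE ?dist2_ge0 ?mulr_ge0 ?ltW //.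
rewrite (law_of_cosines p0 q0).
set a := dist2 p r in p_lo p_hi p0 *; set b := dist2 q r in q_lo q_hi q0 *.
have radial : (a - b) ^+ 2 < c ^+ 2 by rewrite -subr_gt0 subr_sqr; apply: mulr_gt0; lra.
have ab_le : a * b <= ((k%:R + 1) * c) ^+ 2 by rewrite expr2; apply: ler_pM; lra.
have := @sector_cos_bound R k k1; rewrite -/w => sector.
have angular : 2 * a * b * (1 - cos (polar_angle p r - polar_angle q r))
               <= 2 * ((k%:R + 1) * c) ^+ 2 * (1 - cos w).
  by apply: ler_pM; try nra.
(* [(2c)^2 = c^2 + 3c^2]: the radial gap accounts for less than [c^2], the angle for at most [3c^2]. *)
have : 2 * ((k%:R + 1) * c) ^+ 2 * (1 - cos w) <= 3 * c ^+ 2.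
  have -> : 2 * ((k%:R + 1) * c) ^+ 2 * (1 - cos w)
            = (2 * (k%:R + 1) ^+ 2 * (1 - cos w)) * c ^+ 2 by ring.
  by rewrite ler_wpM2r ?sqr_ge0.
nra.
Qed.

Lemma annulus_size_le c (k : nat) r (F : seq (R * R)) :
  0 < c -> (1 <= k)%N -> uniq F -> all (in_annulus r c k) F ->
  {in F &, forall p q, p != q -> 2 * c <= dist2 p q} ->
  (size F <= 6 * k + 3)%N.
Proof.
move=> c0 k1 uF /allP inF sep.
set w : R := sector_width k; have w0 : 0 < w := sector_width_gt0 k.
pose sector p := Num.truncn (polar_angle p r / w).
have dist_gt0 p : p \in F -> 0 < dist2 p r.
  move=> /inF /andP[lo _]; apply: lt_le_trans lo.
  by rewrite mulr_gt0 // ltr0n.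
have sector_lt p : p \in F -> (sector p < 6 * k + 3)%N.
  move=> /dist_gt0 /polar_angleP[ang0 ang_lt _ _].
  rewrite truncn_lt_nat; last by rewrite divr_ge0 // ltW.
  by rewrite ltr_pdivrMr // natrD natrM mulrC sector_widthK.
have sector_inj : {in F &, injective sector}.
  move=> p q Fp Fq same; apply/eqP/negPn/negP => pq.
  move: (sep p q Fp Fq pq); rewrite leNgt => /negP; apply.
  apply: (dist2_lt_same_sector c0 k1 (inF p Fp) (inF q Fq)).
  have [p_ang0 _ _ _] := polar_angleP (dist_gt0 p Fp).
  have [q_ang0 _ _ _] := polar_angleP (dist_gt0 q Fq).
  exact: truncn_div_eq_dist_lt w0 p_ang0 q_ang0 same.
have sub : {subset map sector F <= iota 0 (6 * k + 3)}.
  by move=> i /mapP[p Fp ->]; rewrite mem_iota add0n sector_lt.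
have uniq_sectors : uniq (map sector F) by rewrite map_inj_in_uniq.
have := uniq_leq_size uniq_sectors sub.
by rewrite size_map size_iota.
Qed.

Lemma count_annulus_le c (k : nat) r (F : seq (R * R)) :
  0 < c -> (1 <= k)%N -> uniq F ->
  {in F &, forall p q, p != q -> 2 * c <= dist2 p q} ->
  (count (fun p => Num.truncn (dist2 p r / c) == k) F <= 6 * k + 3)%N.
Proof.
move=> c0 k1 uF sep; rewrite -size_filter.
apply: (@annulus_size_le c k r) => //; first exact: filter_uniq.
  apply/allP => p; rewrite mem_filter => /andP[/eqP <- _].
  exact: in_annulus_truncn c0 (dist2_ge0 p r).
by move=> p q; rewrite !mem_filter => /andP[_ Fp] /andP[_ Fq]; apply: sep.
Qed.

End Annuli.

Lemma sum_count_index {V : pzSemiRingType} {T : eqType} (s : seq T)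
    (g : T -> nat) (h : nat -> V) {m n : nat} :
  (forall x, x \in s -> (m <= g x < n)%N) ->
  \sum_(x <- s) h (g x) = \sum_(m <= k < n) (count (fun x => g x == k) s)%:R * h k.
Proof.
elim: s => [_|a s IH in_range].
  by rewrite big_nil big1 // => k _; rewrite mul0r.
rewrite big_cons IH => [|x sx]; last by apply: in_range; rewrite inE sx orbT.
under [RHS]eq_bigr => k _ do rewrite /= natrD mulrDl.
rewrite big_split /=; congr (_ + _).
rewrite (bigD1_seq (g a)) ?iota_uniq ?mem_index_iota ?in_range ?mem_head //=.
by rewrite eqxx mul1r big1 ?addr0 // => k /negPf; rewrite eq_sym => ->; rewrite mul0r.
Qed.

Section PathLoss.
Context {R : realType}.
Implicit Types (alpha c x y : R) (p r : R * R).

Lemma eta_pl_ge0 alpha x : 0 <= eta_pl alpha x.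
Proof. by rewrite /eta_pl div1r invr_ge0 powR_ge0. Qed.

Lemma eta_pl_le alpha x y : 0 <= alpha -> 0 <= x <= y -> eta_pl alpha y <= eta_pl alpha x.
Proof.
move=> alpha0 /andP[x0 xy]; have y0 := le_trans x0 xy.
rewrite /eta_pl !div1r lef_pV2 ?posrE ?powR_gt0 ?ltr_wpDr //.
by apply: ge0_ler_powR; rewrite ?nnegrE ?lerD2l ?addr_ge0.
Qed.

Lemma sum_eta_annuli_le alpha c M r (T : seq (R * R)) :
  0 <= alpha -> 0 < c -> uniq T ->
  (forall p, p \in T -> c <= dist2 p r <= M) ->
  {in T &, forall p q, p != q -> 2 * c <= dist2 p q} ->
  \sum_(p <- T) eta_pl alpha (dist2 p r)
    <= \sum_(1 <= k < (Num.truncn (M / c)).+1) (6 * k%:R + 3) / (1 + k%:R * c) `^ alpha.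
Proof.
move=> alpha0 c0 uT dist_range sep.
pose annulus p := Num.truncn (dist2 p r / c).
have annulus_range p : p \in T -> (1 <= annulus p < (Num.truncn (M / c)).+1)%N.
  move=> /dist_range /andP[lo hi]; rewrite ltnS truncn_gt0 ler_pdivlMr // mul1r lo.
  by apply: le_truncn; rewrite ler_pM2r ?invr_gt0.
have eta_annulus p : p \in T -> eta_pl alpha (dist2 p r) <= eta_pl alpha ((annulus p)%:R * c).
  move=> _; apply: eta_pl_le => //; rewrite mulr_ge0 ?(ltW c0) //=.
  by rewrite -ler_pdivlMr // truncn_le divr_ge0 ?dist2_ge0 // ltW.
apply: (@le_trans _ _ (\sum_(p <- T) eta_pl alpha ((annulus p)%:R * c))).
  by rewrite big_seq [leRHS]big_seq; apply: ler_sum.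
rewrite (sum_count_index T annulus (fun k => eta_pl alpha (k%:R * c)) annulus_range).
apply: ler_sum_nat => k /andP[k1 _].
rewrite /eta_pl div1r ler_wpM2r ?invr_ge0 ?powR_ge0 //.
have -> : 6 * k%:R + 3 = (6 * k + 3)%:R :> R by rewrite natrD natrM.
by rewrite ler_nat count_annulus_le.
Qed.

Lemma SINR_ge t r (T : seq (R * R)) (P No : R) (eta : R -> R) (B S : R) :
  0 < No -> 0 < P -> 0 < B -> 1 / B <= eta (dist2 t r) ->
  0 <= \sum_(t' <- T) eta (dist2 t' r) <= S ->
  1 / (B * (No / P + S)) <= SINR t r T P No eta.
Proof.
move=> No0 P0 B0 signal /andP[I0 IS].
have S0 : 0 <= S := le_trans I0 IS.
rewrite /SINR -mulr_sumr.
have PS0 : 0 <= P * S := mulr_ge0 (ltW P0) S0.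
have PI0 : 0 <= P * \sum_(t' <- T) eta (dist2 t' r) := mulr_ge0 (ltW P0) I0.
have -> : 1 / (B * (No / P + S)) = (P * (1 / B)) / (No + P * S).
  by field; rewrite !gt_eqF //; lra.
apply: ler_pM.
- exact: mulr_ge0 (ltW P0) (divr_ge0 ler01 (ltW B0)).
- by rewrite invr_ge0; lra.
- by rewrite ler_pM2l.
- by rewrite lef_pV2 ?posrE ?lerD2l ?ler_pM2l //; lra.
Qed.

End PathLoss.

Lemma DC_dist_ge {R : realType} {C D : R} {t r : R * R} {T : seq (R * R)} {p} :
  0 <= D -> DC C D t r T -> t \notin T -> p \in T -> C * (1 + D / 2) <= dist2 p r.
Proof.
move=> D0 [tr sep] tT Tp.
have pt : p != t by apply: contraNneq tT => <-.
have far : C * (2 + D) <= dist2 p t.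
  by apply: sep pt; rewrite ?mem_head // inE Tp orbT.
have := dist2_triangle p r t; rewrite (dist2C r t).
have C0 : 0 <= C := le_trans (dist2_ge0 t r) tr.
have := mulr_ge0 C0 D0; nra.
Qed.

Theorem lemma1 (R : realType) (No alpha C D : R) (t r : R * R) (T : seq (R * R)) :
  0 < No -> 0 < alpha -> 0 < C -> 0 < D ->
  uniq T -> t \notin T ->
  DC C D t r T ->
  forall P : R, 0 < P ->
    1 / ((1 + C) `^ alpha *
         (No / P + \sum_(1 <= k < (Kbound C D r T).+1)
                     (6 * k%:R + 3) / ((1 + k%:R * C * (1 + D / 2)) `^ alpha)))
    <= SINR t r T P No (eta_pl alpha).
Proof.
move=> No0 alpha0 C0 D0 uT tT dc P P0.
have [tr sep] := dc.
set c := C * (1 + D / 2).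
have c0 : 0 < c by apply: mulr_gt0 => //; lra.
have far p : p \in T -> c <= dist2 p r := DC_dist_ge (ltW D0) dc tT.
have near p : p \in T -> dist2 p r <= maxdist r T.
  by move=> Tp; apply: (le_bigmax_seq 0 p xpredT (fun q => dist2 q r) Tp).
have sepT : {in T &, forall p q, p != q -> 2 * c <= dist2 p q}.
  move=> p q Tp Tq pq; have -> : 2 * c = C * (2 + D) by rewrite /c; field.
  by apply: sep pq; rewrite inE ?Tp ?Tq orbT.
apply: SINR_ge => //.
- by rewrite powR_gt0 //; lra.
- by apply: (eta_pl_le _ _ C (ltW alpha0)); rewrite dist2_ge0 tr.
apply/andP; split; first by rewrite sumr_ge0 // => p _; rewrite eta_pl_ge0.
rewrite /Kbound -/c; under [X in _ <= X]eq_bigr => k _ do rewrite -mulrA.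
apply: sum_eta_annuli_le => //; first exact: ltW.
by move=> p Tp; rewrite far ?near.
Qed.
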